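(* Let $n,\Delta>0$ be integers and $\mu,\eta$ positive reals. Let $V$ be a set of size $n$ and $\mathcal{B}\subseteq\binom{V}{\Delta}$ a family of $\Delta$-sets with $|\mathcal{B}|\le\mu n^\Delta$. Then at most $(\Delta!/\eta^{\Delta-1})\mu n$ vertices of $V$ are $\eta n$-corrupted by $\mathcal{B}$.
   Context: For $\mathcal{B}\subseteq\binom{V}{\Delta}$ and a real $x>0$: every $B\in\mathcal{B}$ is called $x$-corrupted by $\mathcal{B}$; recursively, for $i=\Delta-1,\Delta-2,\dots,1$, an $i$-set $B\subseteq V$ is $x$-corrupted by $\mathcal{B}$ if it is contained in more than $x$ of the $(i+1)$-sets that are $x$-corrupted by $\mathcal{B}$. A vertex $v$ is $x$-corrupted if the $1$-set $\{v\}$ is. *)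

From mathcomp Require Import all_boot all_order all_algebra.
Set Implicit Arguments. Unset Strict Implicit. Unset Printing Implicit Defensive.
Import Order.TTheory GRing.Theory Num.Theory.
Local Open Scope ring_scope.

(* corrupted_level B D x k = the family of (D - k)-sets that are x-corrupted
   by B, for k = 0, ..., D - 1.  Level 0 is B itself; an (i)-set S is
   x-corrupted if it is contained in more than x of the x-corrupted
   (i+1)-sets. *)
Fixpoint corrupted_level (R : realFieldType) (V : finType)
    (B : {set {set V}}) (D : nat) (x : R) (k : nat) : {set {set V}} :=
  match k with
  | 0 => B
  | k'.+1 =>
      [set S : {set V} | (#|S| == D - k'.+1)%N &
         x < (#|[set T in corrupted_level B D x k' | S \subset T]|)%:R]
  end.

Definition corrupted_vertex (R : realFieldType) (V : finType)
    (B : {set {set V}}) (D : nat) (x : R) (v : V) : bool :=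
  [set v] \in corrupted_level B D x (D - 1).

From mathcomp Require Import all_boot all_order all_algebra.
From mathcomp Require Import ring.
Import Order.TTheory GRing.Theory Num.Theory.
Local Open Scope ring_scope.

(* Double counting the pairs (S, T) with S an x-corrupted (D-k-1)-set contained
   in an x-corrupted (D-k)-set T: each S lies in more than x such T, and each T
   contains only D-k such S, so x |L_(k+1)| <= (D-k) |L_k|.  Iterating D-1 times
   from |L_0| = |B| <= mu n^D with x = eta n gives
   (eta n)^(D-1) |L_(D-1)| <= D! mu n^D, and corrupted vertices inject into L_(D-1). *)

Lemma sum_card_supersets_le (V : finType) (F G : {set {set V}}) (m : nat) :
  {in F, forall T : {set V}, #|T| = m.+1} ->
  {in G, forall S : {set V}, #|S| = m} ->
  (\sum_(S in G) #|[set T in F | S \subset T]| <= m.+1 * #|F|)%N.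
Proof.
move=> szF szG.
have incidences_sym : (\sum_(S in G) #|[set T in F | S \subset T]|
    = \sum_(T in F) #|[set S in G | S \subset T]|)%N.
  have card_sep (A : {set {set V}}) (P : pred {set V}) :
      #|[set X in A | P X]| = (\sum_(X in A | P X) 1)%N.
    by rewrite -sum1_card; apply: eq_bigl => X; rewrite inE.
  under eq_bigr => S _ do rewrite card_sep.
  under [RHS]eq_bigr => T _ do rewrite card_sep.
  rewrite (exchange_big_dep (mem F)) => [|S T _ /andP[]] //.
  by apply: eq_bigr => T TF; apply: eq_bigl => S; rewrite [T \in F]TF.
rewrite incidences_sym mulnC -sum_nat_const; apply: leq_sum => T /szF szT.
rewrite -binSn -szT -cards_draws; apply: subset_leq_card.
by apply/subsetP => S; rewrite !inE => /andP[/szG -> ->]; rewrite eqxx.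
Qed.

Lemma card_corrupted_vertices_le {R : realFieldType} {V : finType}
    (B : {set {set V}}) (D : nat) (x : R) :
  (#|[set v | corrupted_vertex B D x v]| <= #|corrupted_level B D x (D - 1)|)%N.
Proof.
rewrite -(card_imset _ (@set1_inj V)); apply: subset_leq_card.
by apply/subsetP => S /imsetP[v]; rewrite inE => corr_v ->.
Qed.

Section CorruptedLevels.
Variables (R : realFieldType) (V : finType) (B : {set {set V}}) (D : nat) (x : R).
Hypothesis card_B : {in B, forall S : {set V}, #|S| = D}.
Local Notation L := (corrupted_level B D x).

Lemma card_corrupted_level k : (k < D)%N ->
  {in L k, forall S : {set V}, #|S| = (D - k)%N}.
Proof.
case: k => [_|k _] S /=; first by rewrite subn0; exact: card_B.
by rewrite inE => /andP[/eqP].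
Qed.

Lemma corrupted_level_succ_le k : (k.+1 < D)%N ->
  x * #|L k.+1|%:R <= ((D - k) * #|L k|)%:R.
Proof.
move=> ltkD; rewrite -sum1_card natr_sum mulr_sumr.
apply: le_trans (_ : (\sum_(S in L k.+1) #|[set T in L k | S \subset T]|)%:R <= _).
  by rewrite natr_sum; apply: ler_sum => S; rewrite inE mulr1 => /andP[_ /ltW].
rewrite ler_nat -(subnSK (ltnW ltkD)); apply: sum_card_supersets_le.
  by move=> T /(card_corrupted_level _ (ltnW ltkD)); rewrite subnSK // ltnW.
exact: card_corrupted_level.
Qed.

Lemma corrupted_level_card_le k : 0 <= x -> (k < D)%N ->
  x ^+ k * #|L k|%:R <= (D ^_ k * #|B|)%:R.
Proof.
move=> x_ge0; elim: k => [_|k IHk ltkD]; first by rewrite mul1r mul1n.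
have ltkD' := ltnW ltkD.
rewrite exprSr -mulrA ffactnSr -mulnA mulnCA natrM.
apply: le_trans (_ : x ^+ k * ((D - k) * #|L k|)%:R <= _).
  by rewrite ler_wpM2l ?exprn_ge0 // corrupted_level_succ_le.
by rewrite natrM mulrCA ler_wpM2l // IHk.
Qed.

End CorruptedLevels.

Theorem lemma11p7 (R : realFieldType) (V : finType) (n D : nat)
    (mu eta : R) (B : {set {set V}}) :
  (0 < n)%N -> (0 < D)%N -> 0 < mu -> 0 < eta ->
  #|V| = n ->
  (forall S, S \in B -> #|S| = D) ->
  (#|B|)%:R <= mu * (n%:R) ^+ D ->
  (#|[set v : V | corrupted_vertex B D (eta * n%:R) v]|)%:R
    <= ((D`!)%:R / eta ^+ (D - 1)) * mu * n%:R.
Proof.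
case: D => // D n_gt0 _ _ eta_gt0 _ card_B card_B_le; rewrite subn1 /=.
set x := eta * n%:R; set c := #|[set v | _]|.
have x_ge0 : 0 <= x by rewrite mulr_ge0 ?ltW ?ltr0n.
have ffact_top : D.+1 ^_ D = D.+1`! by rewrite -ffactnn ffactnSr subSnn muln1.
have corrupted_le : x ^+ D * c%:R <= D.+1`!%:R * #|B|%:R.
  apply: le_trans (_ : x ^+ D * #|corrupted_level B D.+1 x D|%:R <= _).
    rewrite ler_wpM2l ?exprn_ge0 // ler_nat.
    by have := card_corrupted_vertices_le B D.+1 x; rewrite subn1.
  by rewrite -natrM -ffact_top corrupted_level_card_le.
have scale_gt0 : 0 < eta ^+ D * n%:R ^+ D by rewrite mulr_gt0 ?exprn_gt0 ?ltr0n.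
rewrite -(ler_pM2l scale_gt0) -exprMn.
apply: le_trans corrupted_le _.
have -> : x ^+ D * (D.+1`!%:R / eta ^+ D * mu * n%:R)
        = D.+1`!%:R * (mu * n%:R ^+ D.+1).
  by rewrite exprMn exprSr; field; rewrite expf_neq0 // lt0r_neq0.
by rewrite ler_wpM2l.
Qed.
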